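(* In the setting described in the context, suppose the degree marginal of $P$ has positive variance and $\widetilde{\mathrm{E}}[\theta]=\mathrm{E}[\theta]$. Then $x^{friend}(\theta_i,d_i)>x^{soc}(\theta_i,d_i)$ for all $(\theta_i,d_i)\in\Theta\times D$, and moreover $$\widetilde{\mathrm{E}}[x^{friend}(\theta,d)]>\mathrm{E}[x^{friend}(\theta,d)]>\mathrm{E}[x^{soc}(\theta,d)].$$
   Context: Fix an integer $n\ge 2$, parameters $a>0$, $c>0$, $\phi\in\mathbb{R}$, and a compact set $\Theta\subset[0,\infty)$ of types. Let $D=\{1,\dots,n-1\}$. Let $P$ be a probability distribution on $\Theta\times D$, the joint distribution of the type $\theta$ and degree $d$ of a generic potential neighbor, the same for every agent; $\mathrm{E}$ denotes expectation under $P$. The neighbor distribution $\widetilde P$ is defined by $\widetilde P(A\times\{d\})=\frac{d}{\mathrm{E}[d]}P(A\times\{d\})$, with expectation $\widetilde{\mathrm{E}}$, i.e. $\widetilde{\mathrm{E}}[h(\theta,d)]=\mathrm{E}[d\,h(\theta,d)]/\mathrm{E}[d]$. Standing assumptions: $P(\theta>0)>0$ and $c>a\,\widetilde{\mathrm{E}}[d]$. A strategy is a bounded measurable $x:\Theta\times D\to[0,\infty)$, used by all agents. If others use $x$, an agent of type $\theta_i$, degree $d_i$, choosing $y\ge0$ gets in the society-wide game $EU^{soc}(y;\theta_i,d_i;x)=\theta_i y+a y d_i\mathrm{E}[x(\theta,d)]-\frac{c}{2}y^2+\phi(n-1)\mathrm{E}[x(\theta,d)]$, and in the friend game $EU^{friend}(y;\theta_i,d_i;x)=\theta_i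 y+a y d_i\widetilde{\mathrm{E}}[x(\theta,d)]-\frac{c}{2}y^2+\phi(n-1)\mathrm{E}[x(\theta,d)]$. A Bayesian equilibrium of a game is a strategy $x$ such that for every $(\theta_i,d_i)$, $x(\theta_i,d_i)$ maximizes that game's payoff over $y\ge0$ given others use $x$. Under the standing assumptions each game has a unique Bayesian equilibrium; $x^{soc}$ denotes that of the society-wide game and $x^{friend}$ that of the friend game. *)

From mathcomp Require Import all_boot all_order all_algebra.
From mathcomp Require Import all_classical all_reals all_analysis.
Set Implicit Arguments. Unset Strict Implicit. Unset Printing Implicit Defensive.
Import Order.TTheory GRing.Theory Num.Theory numFieldNormedType.Exports.
Local Open Scope classical_set_scope.
Local Open Scope ring_scope.

Section Defs.
Variable R : realType.

Definition Dset (n : nat) : set nat := [set d | (1 <= d)%N /\ (d <= n.-1)%N].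

(* Expectation E[h] under P (P is concentrated on Theta x D, so we integrate
   over Theta x D; the integrand is h(theta, d) with z = (theta, d)). *)
Definition Exp (P : probability (R * nat)%type R) (Theta : set R) (n : nat)
  (h : R * nat -> R) : R :=
  fine (\int[P]_(z in Theta `*` Dset n) (h z)%:E)%E.

Definition Exptil (P : probability (R * nat)%type R) (Theta : set R) (n : nat)
  (h : R * nat -> R) : R :=
  Exp P Theta n (fun z => (z.2)%:R * h z) / Exp P Theta n (fun z => (z.2)%:R).

Definition is_strategy (Theta : set R) (n : nat) (x : R * nat -> R) : Prop :=
  [/\ measurable_fun (Theta `*` Dset n) x,
      (exists M : R, forall z, (Theta `*` Dset n) z -> `|x z| <= M) &
      (forall z, (Theta `*` Dset n) z -> 0 <= x z)].

Definition EU_soc (P : probability (R * nat)%type R) (Theta : set R) (n : nat)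
  (a c phi : R) (y thi : R) (di : nat) (x : R * nat -> R) : R :=
  thi * y + a * y * di%:R * Exp P Theta n x - c / 2 * y ^+ 2
  + phi * (n.-1)%:R * Exp P Theta n x.

Definition EU_friend (P : probability (R * nat)%type R) (Theta : set R) (n : nat)
  (a c phi : R) (y thi : R) (di : nat) (x : R * nat -> R) : R :=
  thi * y + a * y * di%:R * Exptil P Theta n x - c / 2 * y ^+ 2
  + phi * (n.-1)%:R * Exp P Theta n x.

Definition is_bayes_eq
  (EU : R -> R -> nat -> (R * nat -> R) -> R)
  (Theta : set R) (n : nat) (x : R * nat -> R) : Prop :=
  is_strategy Theta n x /\
  forall z, (Theta `*` Dset n) z ->
    forall y : R, 0 <= y -> EU y z.1 z.2 x <= EU (x z) z.1 z.2 x.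

End Defs.

From mathcomp Require Import all_boot all_order all_algebra.
From mathcomp Require Import all_classical all_reals all_analysis.
From mathcomp Require Import measurable_realfun ring lra.
Set Implicit Arguments. Unset Strict Implicit. Unset Printing Implicit Defensive.
Import Order.TTheory GRing.Theory Num.Theory numFieldNormedType.Exports.
Local Open Scope classical_set_scope.
Local Open Scope ring_scope.

(** Every best response in either game is linear in the agent's own type and
degree, [x(θ, d) = (θ + a d m) / c], where [m] is the mean action that the
game makes payoff-relevant: [E[x]] in the society-wide game, [Ẽ[x]] in the
friend game. Taking [E] (resp. [Ẽ]) of these formulas gives the fixed-point
equations [m_soc (c - a E[d]) = E[θ]] and [m_fr (c - a Ẽ[d]) = Ẽ[θ] = E[θ]].
Positive degree variance means [E[d] < E[d²]/E[d] = Ẽ[d]], so [m_fr > m_soc],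
which yields the pointwise comparison; averaging the friend strategy under [P]
instead of [P̃] replaces [Ẽ[d]] by the smaller [E[d]], giving the chain of
averages. *)

Section Expectation.
Variables (R : realType) (n : nat) (Theta : set R).
Variable P : probability (R * nat)%type R.
Local Notation D := (Theta `*` Dset n).
Local Notation E := (Exp P Theta n).
Local Notation Etil := (Exptil P Theta n).
Local Notation deg := (fun z : R * nat => (z.2)%:R : R).

Definition bounded_measurable (f : R * nat -> R) :=
  measurable_fun D f /\ exists M : R, forall z, D z -> `|f z| <= M.

Lemma bounded_measurableD f g : bounded_measurable f -> bounded_measurable g ->
  bounded_measurable (fun z => f z + g z).
Proof.
move=> [mf [M fM]] [mg [N gN]]; split; first exact: measurable_funD.
exists (M + N) => z Dz; apply: le_trans (ler_normD _ _) _.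
exact: lerD (fM z Dz) (gN z Dz).
Qed.

Lemma bounded_measurableM f g : bounded_measurable f -> bounded_measurable g ->
  bounded_measurable (fun z => f z * g z).
Proof.
move=> [mf [M fM]] [mg [N gN]]; split; first exact: measurable_funM.
by exists (M * N) => z Dz; rewrite normrM; apply: ler_pM; [| | exact: fM | exact: gN].
Qed.

Lemma bounded_measurable_cst k : bounded_measurable (fun _ => k).
Proof. by split; [exact: measurable_cst | exists `|k|]. Qed.

Lemma bounded_measurableZ k f : bounded_measurable f ->
  bounded_measurable (fun z => k * f z).
Proof. exact/bounded_measurableM/bounded_measurable_cst. Qed.

Lemma bounded_measurable_deg : bounded_measurable deg.
Proof.
split.
  apply: measurable_funS (measurableT_comp (f := fun k : nat => (k%:R : R)) _
    (@measurable_snd _ _ _ _)) => //.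
exists n%:R => -[t k] [_ [_ /= kn]]; rewrite ger0_norm // ler_nat.
exact: leq_trans kn (leq_pred _).
Qed.

Lemma bounded_measurable_fst : compact Theta -> bounded_measurable (fun z => z.1).
Proof.
move=> cT; split; first exact: measurable_funS (@measurable_fst _ _ _ _).
have [M [_ MTheta]] := compact_bounded cT.
exists (`|M| + 1) => -[t k] [Tt _] /=.
by apply: MTheta t Tt; rewrite (le_lt_trans (ler_norm M)) // ltrDl.
Qed.

Lemma eq_Exp f g : {in D, f =1 g} -> E f = E g.
Proof. by move=> fg; apply: eq_Rintegral. Qed.

Lemma eq_Exptil f g : {in D, f =1 g} -> Etil f = Etil g.
Proof. by move=> fg; rewrite /Exptil (@eq_Exp _ (fun z => deg z * g z)) // => z /fg ->. Qed.

Lemma Exp_ge0 f : (forall z, D z -> 0 <= f z) -> 0 <= E f.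
Proof. exact: Rintegral_ge0. Qed.

Lemma Exptil_ge0 f : (forall z, D z -> 0 <= f z) -> 0 <= Etil f.
Proof.
move=> f0; apply: divr_ge0; apply: Exp_ge0 => z Dz //.
by rewrite mulr_ge0 ?f0.
Qed.

Hypotheses (mD : measurable D) (PD : P D = 1%E).

Lemma bounded_measurable_integrable f :
  bounded_measurable f -> P.-integrable D (EFin \o f).
Proof.
move=> [mf [M fM]]; apply: measurable_bounded_integrable => //.
  exact: le_lt_trans (probability_le1 P mD) (ltry _).
rewrite /bounded_near; near=> N => z Dz /=; apply: le_trans (fM z Dz) _.
by near: N; apply: nbhs_pinfty_ge; exact: num_real.
Unshelve. all: by end_near. Qed.

Lemma Exp_cst k : E (fun _ => k) = k.
Proof.
by rewrite /Exp -/(Rintegral P D _) Rintegral_cst // (congr1 fine PD) mulr1.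
Qed.

Lemma Exp_comb u v f g : bounded_measurable f -> bounded_measurable g ->
  E (fun z => u * f z + v * g z) = u * E f + v * E g.
Proof.
move=> bf bg; have bi := bounded_measurable_integrable.
by rewrite /Exp -!/(Rintegral P D _) RintegralD ?bi ?(RintegralZl _ mD) ?bi //;
  apply: bounded_measurableZ.
Qed.

Lemma Exptil_comb u v f g : bounded_measurable f -> bounded_measurable g ->
  Etil (fun z => u * f z + v * g z) = u * Etil f + v * Etil g.
Proof.
move=> bf bg; rewrite /Exptil.
rewrite (@eq_Exp _ (fun z => u * (deg z * f z) + v * (deg z * g z))); last first.
  by move=> z _; ring.
by rewrite Exp_comb ?mulrDl ?mulrA //; apply: bounded_measurableM => //;
  exact: bounded_measurable_deg.
Qed.

Lemma Exp_variance f : bounded_measurable f ->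
  E (fun z => (f z - E f) ^+ 2) = E (fun z => f z * f z) - E f ^+ 2.
Proof.
move=> bf; have bff := bounded_measurableM bf bf.
rewrite (@eq_Exp _ (fun z => 1 * (1 * (f z * f z) + (- 2 * E f) * f z)
  + E f ^+ 2 * 1)); last by move=> z _; ring.
rewrite Exp_comb ?Exp_comb ?Exp_cst //; first ring.
- exact: bounded_measurableD (bounded_measurableZ _ bff) (bounded_measurableZ _ bf).
- exact: bounded_measurable_cst.
Qed.

Lemma Exp_gt0 f : bounded_measurable f -> (forall z, D z -> 0 <= f z) ->
  (0 < P (D `&` [set z | (0 < f z)%R]))%E -> 0 < E f.
Proof.
move=> bf f0 Ppos; rewrite lt_neqAle Exp_ge0 // andbT; apply/eqP => Ef0.
have fint := bounded_measurable_integrable bf.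
have intf0 : (\int[P]_(z in D) `|(f z)%:E| = 0)%E.
  transitivity (\int[P]_(z in D) (f z)%:E)%E.
    by apply: eq_integral => z /set_mem Dz; rewrite gee0_abs // lee_fin f0.
  by rewrite -(fineK (integrable_fin_num mD fint)) -[fine _]/(E f) -Ef0.
have [N [mN PN0 suppN]] :=
  (ae_eq_integral_abs P mD ((measurable_EFinP _ _).2 bf.1)).1 intf0.
have mpos : measurable (D `&` [set z | (0 < f z)%R]).
  rewrite (_ : [set z | (0 < f z)%R] = f @^-1` `]0, +oo[); first exact: bf.1.
  by apply/seteqP; split => z /=; rewrite in_itv /= andbT.
suff : P (D `&` [set z | (0 < f z)%R]) = 0%E by move=> P0; rewrite P0 ltxx in Ppos.
apply: subset_measure0 mpos mN _ PN0 => z [Dz fz]; apply: suppN => fz0.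
by case: (fz0 Dz) => fz_eq0; move: fz; rewrite /= fz_eq0 ltxx.
Qed.

Lemma measure_setIl_full S : measurable S -> P (D `&` S) = P S.
Proof.
move=> mS; apply/eqP; rewrite eq_le le_measure ?inE //=; last exact: measurableI.
have PDC0 : P (~` D) = 0%E by rewrite probability_setC // PD subee.
rewrite -[X in (_ <= X)%E]adde0 -PDC0.
apply: le_trans (measureU2 _ _ _); [|exact: measurableI|exact: measurableC].
rewrite le_measure ?inE //; first by apply: measurableU; [exact: measurableI|exact: measurableC].
by move=> z Sz; have [Dz|nDz] := pselect (D z); [left|right].
Qed.

Lemma Exp_deg_ge1 : 1 <= E deg.
Proof.
have : 0 <= E (fun z => 1 * deg z + (-1) * 1).
  by apply: Exp_ge0 => -[t k] [_ [k1 _]] /=; rewrite mul1r mulN1r subr_ge0 ler1n.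
rewrite Exp_comb ?Exp_cst //; first lra.
- exact: bounded_measurable_deg.
- exact: bounded_measurable_cst.
Qed.

Lemma Exp_lt_Exptil_deg : 0 < E (fun z => (deg z - E deg) ^+ 2) -> E deg < Etil deg.
Proof.
have Ed_gt0 : 0 < E deg by apply: lt_le_trans Exp_deg_ge1.
rewrite Exp_variance; last exact: bounded_measurable_deg.
by rewrite subr_gt0 /Exptil ltr_pdivlMr // -expr2.
Qed.

Lemma Exp_fst_gt0 : compact Theta -> Theta `<=` [set t | 0 <= t] ->
  (0 < P [set z : R * nat | (0 < z.1)%R])%E -> 0 < E (fun z => z.1).
Proof.
move=> cT Theta_ge0 Ppos; apply: Exp_gt0.
- exact: bounded_measurable_fst.
- by move=> -[t k] [Tt _]; exact: Theta_ge0.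
rewrite measure_setIl_full //.
have := @measurable_fst _ _ R nat measurableT `]0, +oo[%classic (measurable_itv _).
by rewrite setTI; congr measurable; apply/seteqP; split => z /=; rewrite in_itv /= andbT.
Qed.

End Expectation.

Lemma quadratic_argmax (R : realFieldType) (b c K x : R) : 0 < c -> 0 <= b ->
  (forall y, 0 <= y -> b * y - c / 2 * y ^+ 2 + K <= b * x - c / 2 * x ^+ 2 + K) ->
  x = b / c.
Proof.
move=> c_gt0 b_ge0 xmax; set y := b / c.
have yc : y * c = b by rewrite /y divfK // gt_eqF.
have := xmax y (divr_ge0 b_ge0 (ltW c_gt0)); rewrite -yc => ymax.
(* Completing the square: the payoff at [y = b/c] exceeds that at [x] by [c/2 (x - y)^2]. *)
have : c * (x - y) ^+ 2 <= 0 by nra.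
rewrite pmulr_rle0 // => sq_le0.
have : (x - y) ^+ 2 = 0 by apply/eqP; rewrite eq_le sq_le0 sqr_ge0.
by move/eqP; rewrite sqrf_eq0 subr_eq0 => /eqP.
Qed.

Section Equilibrium.
Variables (R : realType) (n : nat) (a c phi : R) (Theta : set R).
Variable P : probability (R * nat)%type R.
Local Notation D := (Theta `*` Dset n).
Local Notation E := (Exp P Theta n).
Local Notation Etil := (Exptil P Theta n).
Local Notation deg := (fun z : R * nat => (z.2)%:R : R).
Hypotheses (a_gt0 : 0 < a) (c_gt0 : 0 < c) (Theta_ge0 : Theta `<=` [set t | 0 <= t]).

Lemma best_responseE (x : R * nat -> R) (m K : R) : 0 <= m ->
  (forall z, D z -> forall y, 0 <= y ->
    z.1 * y + a * y * deg z * m - c / 2 * y ^+ 2 + K <=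
    z.1 * x z + a * x z * deg z * m - c / 2 * x z ^+ 2 + K) ->
  forall z, D z -> x z = (z.1 + a * deg z * m) / c.
Proof.
move=> m_ge0 xbest [t k] [Tt Dk]; apply: quadratic_argmax (K) _ c_gt0 _ _.
  by apply: addr_ge0; [exact: Theta_ge0 | rewrite /= !mulr_ge0 // ltW].
by move=> y y0; have := xbest _ (conj Tt Dk) y y0; congr (_ <= _); ring.
Qed.

Lemma soc_equilibriumE x : is_bayes_eq (EU_soc P Theta n a c phi) Theta n x ->
  forall z, D z -> x z = (z.1 + a * deg z * E x) / c.
Proof.
move=> [[_ _ x_ge0] xbest]; apply: best_responseE (phi * (n.-1)%:R * E x) _ _.
  exact: Exp_ge0.
exact: xbest.
Qed.

Lemma friend_equilibriumE x : is_bayes_eq (EU_friend P Theta n a c phi) Theta n x ->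
  forall z, D z -> x z = (z.1 + a * deg z * Etil x) / c.
Proof.
move=> [[_ _ x_ge0] xbest]; apply: best_responseE (phi * (n.-1)%:R * E x) _ _.
  exact: Exptil_ge0.
exact: xbest.
Qed.

Hypotheses (cT : compact Theta) (mD : measurable D).

Lemma Exp_linear_response x m : (forall z, D z -> x z = (z.1 + a * deg z * m) / c) ->
  E x * c = E (fun z => z.1) + a * m * E deg /\
  Etil x * c = Etil (fun z => z.1) + a * m * Etil deg.
Proof.
move=> xE; have x_comb : {in D, x =1 fun z => c^-1 * z.1 + c^-1 * a * m * deg z}.
  by move=> z /set_mem /xE ->; field; rewrite gt_eqF.
have bfst : bounded_measurable n Theta (fun z => z.1) by exact: bounded_measurable_fst.
have bdeg : bounded_measurable n Theta deg by exact: bounded_measurable_deg.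
rewrite (eq_Exp P x_comb) (eq_Exptil P x_comb) Exp_comb ?Exptil_comb //.
by split; field; rewrite gt_eqF.
Qed.

End Equilibrium.

Lemma mean_actions_order (R : realFieldType) (a c Et Ed Etd ms mf Ef : R) :
  0 < a -> 0 < Et -> 0 < Ed -> Ed < Etd -> a * Etd < c ->
  ms * c = Et + a * ms * Ed -> mf * c = Et + a * mf * Etd ->
  Ef * c = Et + a * mf * Ed ->
  [/\ ms < mf, Ef < mf & ms < Ef].
Proof.
move=> a_gt0 Et_gt0 Ed_gt0 Ed_lt aEtd_lt msE mfE EfE.
have aEd_lt : a * Ed < a * Etd by rewrite ltr_pM2l.
have c_gt0 : 0 < c by apply: lt_trans aEtd_lt; rewrite mulr_gt0 // (lt_trans Ed_gt0).
have mf_gt0 : 0 < mf.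
  have mf_gap : mf * (c - a * Etd) = Et by lra.
  by rewrite -(pmulr_lgt0 _ (_ : 0 < c - a * Etd)) ?mf_gap // subr_gt0.
have ms_mf : (ms - mf) * (c - a * Ed) = a * mf * (Ed - Etd) by lra.
have Ef_mf : (Ef - mf) * c = a * mf * (Ed - Etd) by lra.
have Ef_ms : (Ef - ms) * c = a * Ed * (mf - ms) by lra.
split; first nra.
- by rewrite -subr_lt0 -(pmulr_llt0 _ c_gt0) Ef_mf pmulr_rlt0 ?mulr_gt0 // subr_lt0.
- by rewrite -subr_gt0 -(pmulr_lgt0 _ c_gt0) Ef_ms !mulr_gt0 // subr_gt0; nra.
Qed.

Theorem proposition1 (R : realType) (n : nat) (a c phi : R)
  (Theta : set R) (P : probability (R * nat)%type R)
  (xsoc xfriend : R * nat -> R) :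
  (2 <= n)%N -> 0 < a -> 0 < c ->
  compact Theta -> Theta `<=` [set t | 0 <= t] ->
  P (Theta `*` Dset n) = 1%E ->
  (0 < P [set z : R * nat | (0 < z.1)%R])%E ->
  a * Exptil P Theta n (fun z => (z.2)%:R) < c ->
  (* degree marginal has positive variance *)
  0 < Exp P Theta n (fun z => ((z.2)%:R - Exp P Theta n (fun w => (w.2)%:R)) ^+ 2) ->
  Exptil P Theta n (fun z => z.1) = Exp P Theta n (fun z => z.1) ->
  is_bayes_eq (EU_soc P Theta n a c phi) Theta n xsoc ->
  is_bayes_eq (EU_friend P Theta n a c phi) Theta n xfriend ->
  (forall z, (Theta `*` Dset n) z -> xsoc z < xfriend z) /\
  Exptil P Theta n xfriend > Exp P Theta n xfriend /\
  Exp P Theta n xfriend > Exp P Theta n xsoc.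
Proof.
(* [2 <= n] only ensures that [D] is nonempty, which [P D = 1] already forces. *)
move=> _ a_gt0 c_gt0 cT Theta_ge0 PD Ppos aEtd_lt var_gt0 Etil_fst soc friend.
have mD : measurable (Theta `*` Dset n).
  apply: measurableX => //; apply: closed_measurable.
  exact: compact_closed (@norm_hausdorff _ _) cT.
have Ed_gt0 := lt_le_trans ltr01 (Exp_deg_ge1 mD PD).
have xsE := soc_equilibriumE a_gt0 c_gt0 Theta_ge0 soc.
have xfE := friend_equilibriumE a_gt0 c_gt0 Theta_ge0 friend.
have [msE _] := Exp_linear_response P c_gt0 cT mD xsE.
have [EfE] := Exp_linear_response P c_gt0 cT mD xfE; rewrite Etil_fst => mfE.
have [ms_lt Ef_lt ms_lt_Ef] := mean_actions_order a_gt0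
  (Exp_fst_gt0 mD PD cT Theta_ge0 Ppos) Ed_gt0 (Exp_lt_Exptil_deg mD PD var_gt0)
  aEtd_lt msE mfE EfE.
split=> // z Dz; rewrite xsE // xfE // ltr_pM2r ?invr_gt0 // ltrD2l.
by rewrite ltr_pM2l // mulr_gt0 // ltr0n; case: Dz => _ [].
Qed.
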